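(* A Lie algebra $L$ is $2$-capable if and only if $Z^{*}_2(L)=0$.
   Context: All Lie algebras are over a fixed field. A Lie algebra $L$ is $2$-capable if $L\cong H/Z_2(H)$ for some Lie algebra $H$, where $Z_2(H)$ denotes the second term of the upper central series of $H$. For $L$ with free presentation $L\cong F/R$ ($F$ free Lie algebra, $R$ an ideal), let $\pi:F/[[R,F],F]\to F/R$ be the natural epimorphism; then $Z^{*}_2(L)=\pi\big(Z_2(F/[[R,F],F])\big)$ (this is independent of the presentation). *)

From HB Require Import structures.
From mathcomp Require Import all_boot all_algebra.
Set Implicit Arguments.
Unset Strict Implicit.
Unset Printing Implicit Defensive.
Import GRing.Theory.
Local Open Scope ring_scope.

Record lieAlgebra (K : fieldType) := LieAlgebra {
  lie_carrier :> lmodType K;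
  lie_br : lie_carrier -> lie_carrier -> lie_carrier;
  lie_br_linl : forall (a : K) (x y z : lie_carrier),
      lie_br (a *: x + y) z = a *: lie_br x z + lie_br y z;
  lie_br_linr : forall (a : K) (x y z : lie_carrier),
      lie_br z (a *: x + y) = a *: lie_br z x + lie_br z y;
  lie_br_alt : forall x : lie_carrier, lie_br x x = 0;
  lie_jacobi : forall x y z : lie_carrier,
      lie_br x (lie_br y z) + lie_br y (lie_br z x) + lie_br z (lie_br x y) = 0
}.
Arguments lie_br {K l}.

Definition lie_hom (K : fieldType) (L M : lieAlgebra K) (f : L -> M) : Prop :=
  (forall (a : K) (x y : L), f (a *: x + y) = a *: f x + f y) /\
  (forall x y : L, f (lie_br x y) = lie_br (f x) (f y)).

Definition surj (A B : Type) (f : A -> B) : Prop := forall y, exists x, f x = y.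

Definition span (K : fieldType) (V : lmodType K) (S : V -> Prop) : V -> Prop :=
  fun v => exists (n : nat) (c : 'I_n -> K) (s : 'I_n -> V),
    (forall i, S (s i)) /\ v = \sum_(i < n) c i *: s i.

Definition br_sub (K : fieldType) (L : lieAlgebra K) (A B : L -> Prop) : L -> Prop :=
  span (fun v : L => exists a b, A a /\ B b /\ v = lie_br a b).

Definition full (T : Type) : T -> Prop := fun _ => True.

Fixpoint ucs (K : fieldType) (H : lieAlgebra K) (n : nat) {struct n} : H -> Prop :=
  match n with
  | 0 => fun x => x = 0
  | n'.+1 => fun x => forall y : H, @ucs K H n' (lie_br x y)
  end.

Definition is_free_on (K : fieldType) (X : Type) (F : lieAlgebra K) (i : X -> F) : Prop :=
  forall (M : lieAlgebra K) (g : X -> M),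
    (exists h : F -> M, lie_hom h /\ forall x, h (i x) = g x) /\
    (forall h1 h2 : F -> M, lie_hom h1 -> lie_hom h2 ->
       (forall x, h1 (i x) = g x) -> (forall x, h2 (i x) = g x) ->
       forall y, h1 y = h2 y).

(* L is 2-capable: L is isomorphic to H / Z_2(H) for some Lie algebra H,
   i.e. there is a surjective Lie homomorphism H -> L with kernel Z_2(H). *)
Definition two_capable (K : fieldType) (L : lieAlgebra K) : Prop :=
  exists (H : lieAlgebra K) (f : H -> L),
    lie_hom f /\ surj f /\ (forall x : H, f x = 0 <-> @ucs K H 2 x).

From Pilot Require Import Defs.
From HB Require Import structures.
From mathcomp Require Import all_boot all_algebra.
From Stdlib Require Import ClassicalEpsilon.
Set Implicit Arguments.
Unset Strict Implicit.
Unset Printing Implicit Defensive.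
Import GRing.Theory.
Local Open Scope ring_scope.

#[local] Arguments ucs {K} H n.

(* If Z*_2(L) = 0 then pi : F/[[R,F],F] -> L itself has kernel exactly
   Z_2(F/[[R,F],F]), since R/[[R,F],F] always lies in the second centre.
   Conversely, given f : H ->> L with kernel Z_2(H), lift p along f to
   beta : F -> H using freeness of F.  Then beta(R) <= Z_2(H), so beta kills
   [[R,F],F]; and H = beta(F) + Z_2(H), so membership in Z_2(H) can be tested
   on brackets with elements of beta(F).  Hence q x in Z_2(Q) forces
   beta x in Z_2(H) = ker f, i.e. pi (q x) = f (beta x) = 0. *)

Section LieBracket.
Variables (K : fieldType) (L : lieAlgebra K).
Implicit Types x y z : L.

Lemma lie_brDl x y z : lie_br (x + y) z = lie_br x z + lie_br y z.
Proof. by have := lie_br_linl 1 x y z; rewrite !scale1r. Qed.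

Lemma lie_brDr x y z : lie_br z (x + y) = lie_br z x + lie_br z y.
Proof. by have := lie_br_linr 1 x y z; rewrite !scale1r. Qed.

Lemma lie_br0l z : lie_br 0 z = 0.
Proof. by apply/(addrI (lie_br 0 z)); rewrite -lie_brDl !addr0. Qed.

Lemma lie_br0r z : lie_br z 0 = 0.
Proof. by apply/(addrI (lie_br z 0)); rewrite -lie_brDr !addr0. Qed.

Lemma lie_brZl (a : K) x z : lie_br (a *: x) z = a *: lie_br x z.
Proof. by have := lie_br_linl a x 0 z; rewrite !addr0 lie_br0l addr0. Qed.

Lemma lie_brZr (a : K) x z : lie_br z (a *: x) = a *: lie_br z x.
Proof. by have := lie_br_linr a x 0 z; rewrite !addr0 lie_br0r addr0. Qed.

Lemma lie_brNl x z : lie_br (- x) z = - lie_br x z.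
Proof. by rewrite -scaleN1r lie_brZl scaleN1r. Qed.

Lemma lie_brNr x z : lie_br z (- x) = - lie_br z x.
Proof. by rewrite -scaleN1r lie_brZr scaleN1r. Qed.

Lemma lie_br_anticomm x y : lie_br y x = - lie_br x y.
Proof.
apply/eqP; rewrite -addr_eq0 addrC; apply/eqP.
have := lie_br_alt (x + y).
by rewrite lie_brDl !lie_brDr !lie_br_alt add0r addr0.
Qed.

End LieBracket.

Section LieHom.
Variables (K : fieldType) (L M N : lieAlgebra K).
Variable f : L -> M.
Hypothesis hom_f : lie_hom f.

Lemma lie_homD x y : f (x + y) = f x + f y.
Proof. by have := (proj1 hom_f) 1 x y; rewrite !scale1r. Qed.

Lemma lie_hom0 : f 0 = 0.
Proof. by apply/(addrI (f 0)); rewrite -lie_homD !addr0. Qed.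

Lemma lie_homZ (a : K) x : f (a *: x) = a *: f x.
Proof. by have := (proj1 hom_f) a x 0; rewrite !addr0 lie_hom0 addr0. Qed.

Lemma lie_homB x y : f (x - y) = f x - f y.
Proof. by rewrite lie_homD -scaleN1r lie_homZ scaleN1r. Qed.

Lemma lie_hom_br x y : f (lie_br x y) = lie_br (f x) (f y).
Proof. exact: (proj2 hom_f). Qed.

Lemma lie_hom_comp (g : M -> N) : lie_hom g -> lie_hom (fun x => g (f x)).
Proof.
move=> [g_lin g_br]; split => [a x y | x y]; first by rewrite (proj1 hom_f) g_lin.
by rewrite lie_hom_br g_br.
Qed.

End LieHom.

Lemma span_ind (K : fieldType) (V : lmodType K) (S P : V -> Prop) :
    (forall v, S v -> P v) -> P 0 ->
    (forall (a : K) x y, P x -> P y -> P (a *: x + y)) ->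
  forall v, Defs.span S v -> P v.
Proof.
move=> PS P0 PC v [n [c [s [Ss ->]]]].
elim: n c s Ss => [|n IHn] c s Ss; first by rewrite big_ord0.
rewrite big_ord_recr /= addrC; apply: PC; first exact: PS.
pose widen := widen_ord (leqnSn n).
by apply: (IHn (fun j => c (widen j)) (fun j => s (widen j))).
Qed.

Lemma span_mem (K : fieldType) (V : lmodType K) (S : V -> Prop) v :
  S v -> Defs.span S v.
Proof.
by move=> Sv; exists 1%N, (fun=> 1), (fun=> v); split => //; rewrite big_ord1 scale1r.
Qed.

Lemma br_sub_br (K : fieldType) (L : lieAlgebra K) (A B : L -> Prop) a b :
  A a -> B b -> br_sub A B (lie_br a b).
Proof. by move=> Aa Bb; apply: span_mem; exists a, b. Qed.

Section UpperCentralSeries.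
Variables (K : fieldType) (L : lieAlgebra K).

Lemma ucs0 n : ucs L n 0.
Proof. by elim: n => [|n IHn] //= y; rewrite lie_br0l. Qed.

Lemma ucs_lin n (a : K) (x y : L) :
  ucs L n x -> ucs L n y -> ucs L n (a *: x + y).
Proof.
elim: n x y => [|n IHn] x y /=; first by move=> -> ->; rewrite scaler0 addr0.
by move=> Zx Zy w; rewrite lie_br_linl; apply: IHn.
Qed.

Lemma lie_hom_br_sub_ucs (F : lieAlgebra K) (f : F -> L) n (A B : F -> Prop) :
    lie_hom f -> (forall a, A a -> ucs L n.+1 (f a)) ->
  forall x, br_sub A B x -> ucs L n (f x).
Proof.
move=> hom_f fA; apply: span_ind => [_ [a [b [Aa [_ ->]]]] | | c x y].
- by rewrite lie_hom_br //; apply: fA.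
- by rewrite lie_hom0 //; apply: ucs0.
- by rewrite (proj1 hom_f); apply: ucs_lin.
Qed.

Lemma ucs2_br_br (z u v : L) : ucs L 2 z -> lie_br z (lie_br u v) = 0.
Proof.
move=> Zz; have := lie_jacobi z u v.
rewrite (lie_br_anticomm z v) lie_brNr (lie_br_anticomm (lie_br z v)) Zz oppr0.
by rewrite (lie_br_anticomm (lie_br z u)) Zz oppr0 !addr0.
Qed.

Lemma ucs2_of_reps (S : L -> Prop) (z : L) :
    (forall h, exists2 s, S s & ucs L 2 (h - s)) ->
    (forall a b, S a -> S b -> lie_br (lie_br z a) b = 0) ->
  ucs L 2 z.
Proof.
move=> reps zS h1 h2 /=.
have [s1 Ss1 Z1] := reps h1; have [s2 Ss2 Z2] := reps h2.
rewrite -(subrK s1 h1) -(subrK s2 h2).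
move: (h1 - s1) (h2 - s2) Z1 Z2 => z1 z2 Z1 Z2.
rewrite [lie_br z _]lie_brDr (lie_br_anticomm z1) lie_brDl lie_brNl Z1 oppr0 add0r.
by rewrite lie_brDr (lie_br_anticomm z2) (ucs2_br_br _ _ Z2) oppr0 add0r zS.
Qed.

End UpperCentralSeries.

Lemma free_lift (K : fieldType) (X : Type) (F H L : lieAlgebra K)
    (i : X -> F) (f : H -> L) (p : F -> L) :
    is_free_on i -> lie_hom f -> surj f -> lie_hom p ->
  exists2 beta : F -> H, lie_hom beta & forall x, f (beta x) = p x.
Proof.
move=> free_i hom_f surj_f hom_p.
have [g fg] := choice (fun x h => f h = p (i x)) (fun x => surj_f (p (i x))).
have [[beta [hom_beta beta_i]] _] := free_i H g.
exists beta => //; have [_ uniq_L] := free_i L (p \o i).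
apply: (uniq_L _ _ (lie_hom_comp hom_beta hom_f) hom_p) => // x.
by rewrite beta_i fg.
Qed.

Section FreePresentation.
Variables (K : fieldType) (L : lieAlgebra K) (X : Type) (F : lieAlgebra K).
Variables (i : X -> F) (p : F -> L) (Q : lieAlgebra K) (q : F -> Q) (pi : Q -> L).
Hypothesis free_i : is_free_on i.
Hypotheses (hom_p : lie_hom p) (surj_p : surj p).
Hypotheses (hom_q : lie_hom q) (surj_q : surj q).
Hypothesis ker_q : forall x : F, q x = 0 <->
  br_sub (br_sub (fun r : F => p r = 0) (@full F)) (@full F) x.
Hypotheses (hom_pi : lie_hom pi) (pi_q : forall x : F, pi (q x) = p x).

Lemma ker_pi_sub_ucs2 z : pi z = 0 -> ucs Q 2 z.
Proof.
have [x <-] := surj_q z; rewrite pi_q => px0 a b /=.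
have [a' <-] := surj_q a; have [b' <-] := surj_q b.
by rewrite -!lie_hom_br //; apply/ker_q/br_sub_br/I/br_sub_br.
Qed.

Lemma two_capable_of_ucs2_sub_ker_pi :
  (forall z, ucs Q 2 z -> pi z = 0) -> two_capable L.
Proof.
move=> ucs2_ker; exists Q, pi; split => //; split.
  by move=> y; have [x <-] := surj_p y; exists (q x).
by move=> z; split; [apply: ker_pi_sub_ucs2 | apply: ucs2_ker].
Qed.

Lemma ucs2_sub_ker_pi_of_two_capable :
  two_capable L -> forall z, ucs Q 2 z -> pi z = 0.
Proof.
move=> [H [f [hom_f [surj_f ker_f]]]] z; have [x <-] := surj_q z; move=> Zx.
have [beta hom_beta f_beta] := free_lift free_i hom_f surj_f hom_p.
have beta_ker_q w : q w = 0 -> beta w = 0.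
  move/ker_q; apply: (lie_hom_br_sub_ucs (n := 0)) => // u.
  apply: lie_hom_br_sub_ucs => // r pr0.
  by apply/ker_f; rewrite f_beta.
rewrite pi_q -f_beta; apply/ker_f.
apply: (ucs2_of_reps (S := fun h => exists a, h = beta a)) => [h | _ _ [a ->] [b ->]].
  have [a fa] := surj_p (f h); exists (beta a); first by exists a.
  by apply/ker_f; rewrite lie_homB // f_beta fa subrr.
by rewrite -!lie_hom_br //; apply: beta_ker_q; rewrite !lie_hom_br //; apply: Zx.
Qed.

End FreePresentation.

Theorem proposition3p1 (K : fieldType) (L : lieAlgebra K)
    (X : Type) (F : lieAlgebra K) (i : X -> F) (p : F -> L)
    (Q : lieAlgebra K) (q : F -> Q) (pi : Q -> L) :
  is_free_on i ->
  lie_hom p -> surj p ->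
  lie_hom q -> surj q ->
  (forall x : F, q x = 0 <->
     br_sub (br_sub (fun r : F => p r = 0) (@full F)) (@full F) x) ->
  lie_hom pi -> (forall x : F, pi (q x) = p x) ->
  (two_capable L <-> (forall z : Q, @ucs K Q 2 z -> pi z = 0)).
Proof.
move=> free_i hom_p surj_p hom_q surj_q ker_q hom_pi pi_q; split.
  exact: (ucs2_sub_ker_pi_of_two_capable free_i hom_p surj_p hom_q surj_q ker_q pi_q).
exact: (two_capable_of_ucs2_sub_ker_pi surj_p hom_q surj_q ker_q hom_pi pi_q).
Qed.
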